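(* Let $H$ be the group defined below (with sets $A_\alpha=\{n\in\omega:\eta_\alpha(n)=1\}$), let $0\to T\to G\xrightarrow{\varphi}H\to 0$ be a balanced exact sequence with $T$ a torsion group (viewed as a subgroup of $G$), and fix elements $g_\alpha\in G$ with $\varphi(g_\alpha)=y_\alpha$ ($\alpha<\kappa$) and $\tilde x_n\in G$ with $\varphi(\tilde x_n)=x_n$ ($n\in\omega$). For $\alpha<\kappa$ and $t\in T$ let $R_{\alpha,t}=\{n\in A_\alpha : g_\alpha-t-\tilde x_n \text{ is not divisible by } p_n \text{ in } G\}$. Assume that for every $\alpha<\kappa$ there exists $t_\alpha\in T$ such that $R_{\alpha,t_\alpha}$ is finite. Then there is a homomorphism $\psi:H\to G$ with $\varphi\psi=\mathrm{id}_H$; hence the sequence splits.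
   Context: All groups are abelian. A pure subgroup $A$ of a torsion-free group $G$ is balanced if every coset $g+A$ contains an element $g+a$ ($a\in A$) whose characteristic is $\geq$ that of $g+x$ for all $x\in A$; an exact sequence $0\to A\to G\to C\to0$ is balanced exact if the image of $A$ is balanced in $G$. Setting: $\kappa$ is an uncountable cardinal, $\eta_\alpha:\omega\to 2$ ($\alpha<\kappa$) are the Cohen reals added by the forcing of finite partial functions $\kappa\times\omega\to 2$ (the lemma is considered in the generic extension). Fix primes $p_0<p_1<\cdots$; let $W=\bigoplus_{n\in\omega}\mathbb{Q}x_n\oplus\bigoplus_{\alpha<\kappa}\mathbb{Q}y_\alpha$ on independent elements, $F=\bigoplus_n\mathbb{Z}x_n\oplus\bigoplus_{\alpha<\kappa}\mathbb{Z}y_\alpha$, and $H$ the subgroup of $W$ generated by $F$ and all $p_n^{-1}(y_\alpha-x_n)$ with $\eta_\alpha(n)=1$. *)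

From HB Require Import structures.
From mathcomp Require Import all_boot all_order all_algebra.
From mathcomp Require Import boolp functions.
Set Implicit Arguments. Unset Strict Implicit. Unset Printing Implicit Defensive.
Import Order.TTheory GRing.Theory Num.Theory.
Local Open Scope ring_scope.

(* An element of W is represented as a
   function [nat + K -> rat] (coordinates w.r.t. x_n = inl n, y_a = inr a);
   the group structure is pointwise (instance from mathcomp-classical). H is a
   subgroup of the finitely supported functions, so this ambient choice does
   not change H. *)
Definition W (K : Type) := (nat + K -> rat)%type.

Definition xv (K : Type) (n : nat) : W K :=
  fun j => match j with inl m => if m == n then 1 else 0 | inr _ => 0 end.
Definition yv (K : eqType) (a : K) : W K :=
  fun j => match j with inl _ => 0 | inr b => if b == a then 1 else 0 end.

Inductive inH (K : eqType) (p : nat -> nat) (eta : K -> nat -> bool) : W K -> Prop :=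
| inH0 : inH p eta 0
| inHx n : inH p eta (@xv K n)
| inHy a : inH p eta (yv a)
| inHz a n : eta a n = true ->
    inH p eta (fun j => (p n)%:R^-1 * (yv a j - @xv K n j))
| inHsub u v : inH p eta u -> inH p eta v -> inH p eta (u - v).

Definition divisible (G : zmodType) (m : nat) (g : G) : Prop :=
  exists h : G, g = h *+ m.

Definition subgroup (G : zmodType) (A : G -> Prop) : Prop :=
  A 0 /\ forall a b, A a -> A b -> A (a - b).

Definition torsion_pred (G : zmodType) (A : G -> Prop) : Prop :=
  forall a, A a -> exists2 n : nat, (0 < n)%N & a *+ n = 0.

Definition pure (G : zmodType) (A : G -> Prop) : Prop :=
  forall (a : G) (m : nat), A a -> divisible m a ->
    exists2 b, A b & a = b *+ m.

Definition char_ge (G : zmodType) (u v : G) : Prop :=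
  forall p k : nat, prime p -> divisible (p ^ k) v -> divisible (p ^ k) u.

Definition balanced (G : zmodType) (A : G -> Prop) : Prop :=
  pure A /\
  forall g : G, exists2 a, A a & forall x, A x -> char_ge (g + a) (g + x).

From HB Require Import structures.
From mathcomp Require Import all_boot all_order all_algebra.
From mathcomp Require Import boolp functions ring.
Import GRing.Theory Num.Theory.
Local Open Scope ring_scope.
Set Implicit Arguments. Unset Strict Implicit. Unset Printing Implicit Defensive.

(* H is presented by the generators x_n, y_a, z_(a,n) (for eta a n) subject
   only to the relations p_n z_(a,n) = y_a - x_n: if a word in the generators
   vanishes in W, then reading off the y_a-coordinate shows that the total
   coefficient of each z_(a,n) is divisible by p_n (all other terms have
   denominators prime to p_n), so the z_(a,n) can be traded for y_a - x_n
   and one is left with a vanishing word in the independent x_n, y_a.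
   Hence phi splits as soon as the y_a have lifts Y_a with p_n | Y_a - x~_n
   whenever eta a n.  The lift g_a - t_a only fails this for the n < N_a;
   there the defect is an element of the torsion group T, and subtracting the
   sum of the p_n-primary parts of these finitely many defects, each of which
   is divisible by every other prime, repairs all of them at once. *)

Section Subgroups.
Variables (G : zmodType) (A : G -> Prop).
Hypothesis subA : subgroup A.

Lemma subgroupN a : A a -> A (- a).
Proof. by case: subA => A0 AB Aa; rewrite -sub0r; apply: AB. Qed.

Lemma subgroupD a b : A a -> A b -> A (a + b).
Proof. by move=> Aa Ab; rewrite -[b]opprK; apply: subA.2 => //; apply: subgroupN. Qed.

Lemma subgroup_sum (I : Type) (r : seq I) (P : pred I) (F : I -> G) :
  (forall i, P i -> A (F i)) -> A (\sum_(i <- r | P i) F i).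
Proof. by move=> AF; apply: big_ind => //; [exact: subA.1 | exact: subgroupD]. Qed.

Lemma subgroupMn a n : A a -> A (a *+ n).
Proof.
move=> Aa; elim: n => [|n IHn]; first exact: subA.1.
by rewrite mulrS; apply: subgroupD.
Qed.

End Subgroups.

Lemma subgroup_divisible (G : zmodType) m : subgroup (@divisible G m).
Proof.
split; first by exists 0; rewrite mul0rn.
by move=> _ _ [a ->] [b ->]; exists (a - b); rewrite mulrnBl.
Qed.

Lemma divisible_coprime_order (G : zmodType) (D : G) r k :
  (0 < r)%N -> coprime r k -> D *+ k = 0 -> divisible r D.
Proof.
move=> r_gt0 /eqP cop Dk0; have [u v Euv _] := egcdnP k r_gt0.
rewrite cop in Euv; exists (D *+ u).
by rewrite -mulrnA Euv mulrnDr [(v * k)%N]mulnC mulrnA Dk0 mul0rn add0r mulr1n.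
Qed.

Lemma torsion_primary_multiple (G : zmodType) (D : G) q k :
  prime q -> (0 < k)%N -> D *+ k = 0 ->
  exists c : nat, divisible q (D - D *+ c) /\
    forall r, prime r -> r != q -> divisible r (D *+ c).
Proof.
move=> q_pr k_gt0 Dk0; have [m q'm Ek] := pfactor_coprime q_pr k_gt0.
have m_gt0 : (0 < m)%N by move: k_gt0; rewrite Ek muln_gt0 => /andP[].
have [u v Euv _] := egcdnP q m_gt0.
rewrite gcdnC (eqP q'm) in Euv.
exists (u * m)%N; split.
  exists (- (D *+ v)).
  by rewrite Euv mulrnDr mulr1n mulrnA mulNrn opprD addrCA subrr addr0.
move=> r r_pr rq.
apply: (divisible_coprime_order (prime_gt0 r_pr) _ (k := q ^ logn q k)).
  by rewrite coprimeXr // prime_coprime // dvdn_prime2.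
by rewrite -mulrnA -mulnA -Ek mulnC mulrnA Dk0 mul0rn.
Qed.

Lemma torsion_crt (G : zmodType) (S : G -> Prop) (q : nat -> nat) (e : nat -> G) N :
  subgroup S -> torsion_pred S -> (forall n, prime (q n)) -> injective q ->
  (forall m, S (e m)) ->
  exists u, [/\ S u, forall n, (n < N)%N -> divisible (q n) (u - e n)
              & forall n, (N <= n)%N -> divisible (q n) u].
Proof.
move=> subS torS q_pr q_inj Se.
have /choice[c ec] m : exists c : nat, divisible (q m) (e m - e m *+ c) /\
    forall r, prime r -> r != q m -> divisible r (e m *+ c).
  have [k k_gt0 ek0] := torS _ (Se m).
  exact: torsion_primary_multiple (q_pr m) k_gt0 ek0.
have div_other n (P : pred 'I_N) : (forall m : 'I_N, P m -> (m : nat) != n) ->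
    divisible (q n) (\sum_(m < N | P m) e m *+ c m).
  move=> Pn; apply: (subgroup_sum (subgroup_divisible _ _)) => m /Pn mn.
  by apply: (ec m).2 => //; apply: contra mn => /eqP/q_inj->.
exists (\sum_(m < N) e m *+ c m); split.
- by apply: (subgroup_sum subS) => m _; apply: subgroupMn.
- move=> n nN; rewrite (bigD1 (Ordinal nN)) //= addrAC.
  apply: (subgroupD (subgroup_divisible _ _)); last exact: div_other.
  by rewrite -opprB; apply: (subgroupN (subgroup_divisible _ _)) (ec n).1.
- move=> n Nn; apply: div_other => m _.
  by rewrite neq_ltn (leq_trans (ltn_ord m) Nn).
Qed.

Definition pintegral (q : nat) (x : rat) :=
  exists2 d : nat, coprime q d & d%:R * x \is a Num.int.

Lemma pintegral_int q x : x \is a Num.int -> pintegral q x.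
Proof. by exists 1%N; rewrite ?coprimen1 ?mul1r. Qed.

Lemma pintegral0 q : pintegral q 0.
Proof. by apply: pintegral_int; rewrite rpred0. Qed.

Lemma pintegralD q x y : pintegral q x -> pintegral q y -> pintegral q (x + y).
Proof.
move=> [d qd dx] [e qe ey]; exists (d * e)%N; first by rewrite coprimeMr qd.
have -> : (d * e)%:R * (x + y) = e%:R * (d%:R * x) + d%:R * (e%:R * y) :> rat.
  by rewrite natrM; ring.
by apply: rpredD; apply: rpredM; rewrite ?natr_int.
Qed.

Lemma pintegralMz q x k : pintegral q x -> pintegral q (x *~ k).
Proof. by move=> [d qd dx]; exists d => //; rewrite mulrzAr rpredMz. Qed.

Lemma pintegral_inv q m : coprime q m -> pintegral q m%:R^-1.
Proof.
move=> qm; exists m => //; have [->|m0] := eqVneq m 0%N; first by rewrite mul0r.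
by rewrite mulfV ?pnatr_eq0.
Qed.

Lemma pintegral_dvd q (k : int) :
  prime q -> pintegral q (k%:~R / q%:R) -> (q %| k)%Z.
Proof.
move=> q_pr [d qd /intrP[z Ez]].
have q0 : q%:R != 0 :> rat by rewrite pnatr_eq0 -lt0n prime_gt0.
have Edk : (d%:Z * k = z * q%:Z)%R.
  by apply: (@intr_inj rat); rewrite !intrM -Ez !pmulrn mulrA divfK.
have : (q %| `|(d%:Z * k)%R|)%N by rewrite Edk abszM dvdn_mull.
by rewrite abszM Gauss_dvdr.
Qed.

Lemma natmulfI (T : Type) (R : numDomainType) (m : nat) (f g : T -> R) :
  (0 < m)%N -> f *+ m = g *+ m -> f = g.
Proof.
move=> m_gt0 E; apply/funext => j; have /eqP := congr1 (fun h => h j) E.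
by rewrite !natmulfctE -subr_eq0 -mulrnBl mulrn_eq0 eqn0Ngt m_gt0 subr_eq0 => /eqP.
Qed.

Section Presentation.
Variables (K : eqType) (p : nat -> nat) (eta : K -> nat -> bool).
Hypotheses (p_prime : forall n, prime (p n)) (p_inj : injective p).

Inductive gen := GX of nat | GY of K | GZ of K & nat.

Definition gen_to_sum (c : gen) : nat + (K + K * nat) :=
  match c with GX n => inl n | GY a => inr (inl a) | GZ a n => inr (inr (a, n)) end.
Definition sum_to_gen (s : nat + (K + K * nat)) : gen :=
  match s with inl n => GX n | inr (inl a) => GY a | inr (inr (a, n)) => GZ a n end.
Lemma gen_to_sumK : cancel gen_to_sum sum_to_gen. Proof. by case. Qed.
HB.instance Definition _ := Equality.copy gen (can_type gen_to_sumK).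

Definition is_GZ (c : gen) := if c is GZ _ _ then true else false.
Definition gen_in_H (c : gen) := if c is GZ a n then eta a n else true.

Definition word := seq (gen * int).
Definition word_in_H (L : word) := all (fun t => gen_in_H t.1) L.
Definition eval_word (M : zmodType) (v : gen -> M) (L : word) : M :=
  \sum_(t <- L) v t.1 *~ t.2.
Definition sub_word (L1 L2 : word) : word := L1 ++ [seq (t.1, - t.2) | t <- L2].
Definition coef (c : gen) (L : word) : int := \sum_(t <- L | t.1 == c) t.2.
Definition drop_gen (c : gen) (L : word) : word := [seq t <- L | t.1 != c].

Definition respects_relations (M : zmodType) (v : gen -> M) :=
  forall a n, eta a n -> v (GY a) - v (GX n) = v (GZ a n) *+ p n.

Definition genW (c : gen) : W K :=
  match c with
  | GX n => xv n
  | GY a => yv a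
  | GZ a n => fun j => (p n)%:R^-1 * (yv a j - xv n j)
  end.

Lemma word_in_H_sub L1 L2 :
  word_in_H L1 -> word_in_H L2 -> word_in_H (sub_word L1 L2).
Proof. by rewrite /word_in_H all_cat all_map => -> . Qed.

Lemma eval_word_sub (M : zmodType) (v : gen -> M) L1 L2 :
  eval_word v (sub_word L1 L2) = eval_word v L1 - eval_word v L2.
Proof.
rewrite /eval_word big_cat big_map /= -sumrN; congr (_ + _).
by apply: eq_bigr => t _; rewrite mulrNz.
Qed.

Lemma raddf_eval_word (M M' : zmodType) (f : {additive M -> M'}) (v : gen -> M) L :
  f (eval_word v L) = eval_word (f \o v) L.
Proof. by rewrite raddf_sum; apply: eq_bigr => t _; rewrite raddfMz. Qed.

Lemma eval_word_apply (T : Type) (M : zmodType) (v : gen -> T -> M) L j :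
  eval_word v L j = eval_word (fun c => v c j) L.
Proof.
rewrite /eval_word; elim: L => [|t L IHL]; rewrite ?big_nil // !big_cons -IHL.
rewrite addrfctE; congr (_ + _).
by case: t.2 => n; rewrite ?NegzE ?mulrNz -!pmulrn natmulfctE.
Qed.

Lemma eval_word_split (M : zmodType) (v : gen -> M) c L :
  eval_word v L = eval_word v (drop_gen c L) + v c *~ coef c L.
Proof.
rewrite /eval_word big_filter (bigID (fun t => t.1 == c)) /= addrC mulrz_sumr.
by congr (_ + _); apply: eq_bigr => t /eqP->.
Qed.

Lemma respects_genW : respects_relations genW.
Proof.
move=> a n _; apply/funext => j.
rewrite natmulfctE /= -[RHS]mulr_natr mulrAC mulVf ?mul1r //.
by rewrite pnatr_eq0 -lt0n prime_gt0.
Qed.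

(* The coordinate of W read off by a generator x_n or y_a; junk on GZ. *)
Definition coord (c : gen) : nat + K :=
  match c with GX n => inl n | GY a => inr a | GZ a _ => inr a end.

Lemma genW_coord c : ~~ is_GZ c -> genW c (coord c) = 1.
Proof. by case: c => //= [n|a] _; rewrite eqxx. Qed.

Lemma genW_coord_neq c c' :
  ~~ is_GZ c -> ~~ is_GZ c' -> c' != c -> genW c' (coord c) = 0.
Proof.
case: c => [n|a|//] _; case: c' => [m|b|//] _ //= ne.
  by case: (n =P m) ne => [->|//]; rewrite eqxx.
by case: (a =P b) ne => [->|//]; rewrite eqxx.
Qed.

Lemma eval_genW_coord c L : ~~ is_GZ c -> all (fun t => ~~ is_GZ t.1) L ->
  eval_word genW L (coord c) = (coef c L)%:~R.
Proof.
move=> cZ LZ; rewrite eval_word_apply (eval_word_split _ c) genW_coord //.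
rewrite [eval_word _ _]big1_seq ?add0r //= => t; rewrite mem_filter => /andP[tc tL].
by rewrite genW_coord_neq ?mul0rz // (allP LZ).
Qed.

Lemma eval_word_eq0_noZ (M : zmodType) (v : gen -> M) L :
  all (fun t => ~~ is_GZ t.1) L -> eval_word genW L = 0 -> eval_word v L = 0.
Proof.
have [k] := ubnP (size L); elim: k L => // k IHk [|t L] //.
  by rewrite /eval_word !big_nil.
rewrite ltnS => sizeL LZ L0; set c := t.1.
have coef0 : coef c (t :: L) = 0.
  apply/eqP; rewrite -(intr_eq0 rat) -eval_genW_coord ?L0 //.
  by case/andP: LZ.
have drop_all : all (fun t => ~~ is_GZ t.1) (drop_gen c (t :: L)).
  by apply/allP => u; rewrite mem_filter => /andP[_ /(allP LZ)].
rewrite (eval_word_split v c) coef0 mulr0z addr0; apply: IHk => //.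
  by rewrite /drop_gen /= eqxx /= size_filter (leq_ltn_trans (count_size _ _)).
by move: L0; rewrite (eval_word_split _ c) coef0 mulr0z addr0.
Qed.

Lemma pintegral_genW a n c : c != GZ a n -> pintegral (p n) (genW c (inr a)).
Proof.
case: c => [m|b|b m] /= cn; first exact: pintegral0.
  by apply: pintegral_int; case: ifP; rewrite ?rpred1 ?rpred0.
rewrite subr0; case: (a =P b) cn => [<- anm|_ _]; last first.
  by rewrite mulr0; apply: pintegral0.
rewrite mulr1; apply: pintegral_inv; rewrite prime_coprime // dvdn_prime2 //.
by apply: contra anm => /eqP/p_inj->.
Qed.

Lemma coef_GZ_dvd a n L : eval_word genW L = 0 -> (p n %| coef (GZ a n) L)%Z.
Proof.
move=> /(congr1 (fun w => w (inr a))); rewrite /= eval_word_apply.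
rewrite (eval_word_split _ (GZ a n)) /= eqxx subr0 mulr1 => /eqP.
rewrite addrC addr_eq0 => /eqP Ek; apply: pintegral_dvd (p_prime n) _.
rewrite mulrzl Ek -mulrN1z; apply: pintegralMz.
rewrite /eval_word big_filter; apply: big_ind => [|x y|t tn].
- exact: pintegral0.
- exact: pintegralD.
- exact/pintegralMz/pintegral_genW.
Qed.

Lemma eval_word_elim (M : zmodType) (v : gen -> M) a n j L :
  respects_relations v -> eta a n -> coef (GZ a n) L = j * (p n)%:Z ->
  eval_word v L = eval_word v [:: (GY a, j), (GX n, - j) & drop_gen (GZ a n) L].
Proof.
move=> rv ean Ej; rewrite (eval_word_split v (GZ a n)) Ej /eval_word !big_cons /=.
rewrite addrA addrC mulrzA mulrzAC -pmulrn -rv //.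
by rewrite mulrzBl mulrNz.
Qed.

Lemma count_GZ_drop_gen c L : is_GZ c -> c \in [seq t.1 | t <- L] ->
  (count (fun t => is_GZ t.1) (drop_gen c L) < count (fun t => is_GZ t.1) L)%N.
Proof.
move=> cZ; elim: L => //= t L IHL; rewrite in_cons /drop_gen /=.
have [-> _|tc /= cL] := eqVneq t.1 c.
  by rewrite cZ add1n ltnS count_filter sub_count // => u /andP[].
by rewrite ltn_add2l IHL //; case/orP: cL => // /eqP ct; rewrite ct eqxx in tc.
Qed.

Lemma eval_word_eq0 (M : zmodType) (v : gen -> M) L :
  respects_relations v -> word_in_H L -> eval_word genW L = 0 -> eval_word v L = 0.
Proof.
move=> rv; have [k] := ubnP (count (fun t => is_GZ t.1) L); elim: k L => // k IHk L.
rewrite ltnS => countL HL L0.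
have [/hasP[[c i] tL /= cZ] | noZ] := boolP (has (fun t => is_GZ t.1) L); last first.
  by apply: eval_word_eq0_noZ L0; rewrite -all_predC in noZ.
case: c cZ tL => // a n _ tL; have ean : eta a n := allP HL _ tL.
have [j Ej] := dvdzP (coef_GZ_dvd a n L0).
rewrite (eval_word_elim rv ean Ej); apply: IHk.
- apply: leq_trans countL; apply: count_GZ_drop_gen => //.
  by apply/mapP; exists (GZ a n, i).
- rewrite /word_in_H /=; apply/allP => t.
  by rewrite mem_filter => /andP[_ /(allP HL)].
- by rewrite -L0 [RHS](eval_word_elim respects_genW ean Ej).
Qed.

Lemma inH_word h : inH p eta h -> exists2 L, word_in_H L & eval_word genW L = h.
Proof.
have eval1 c : eval_word genW [:: (c, 1)] = genW c by rewrite /eval_word big_seq1.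
elim=> [|n|a|a n ean|_ _ _ [L1 H1 <-] _ [L2 H2 <-]].
- by exists [::]; rewrite /eval_word ?big_nil.
- by exists [:: (GX n, 1)]; rewrite ?eval1.
- by exists [:: (GY a, 1)]; rewrite ?eval1.
- by exists [:: (GZ a n, 1)]; rewrite /word_in_H /= ?ean ?eval1.
- by exists (sub_word L1 L2); rewrite ?word_in_H_sub ?eval_word_sub.
Qed.

Lemma presentation_lift (M : zmodType) (v : gen -> M) : respects_relations v ->
  exists psi : W K -> M,
    (forall u w, inH p eta u -> inH p eta w -> psi (u - w) = psi u - psi w) /\
    (forall L, word_in_H L -> psi (eval_word genW L) = eval_word v L).
Proof.
move=> rv.
have eval_word_inj L1 L2 : word_in_H L1 -> word_in_H L2 ->
    eval_word genW L1 = eval_word genW L2 -> eval_word v L1 = eval_word v L2.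
  move=> H1 H2 /eqP; rewrite -subr_eq0 -eval_word_sub => /eqP L0.
  by apply/eqP; rewrite -subr_eq0 -eval_word_sub eval_word_eq0 ?word_in_H_sub.
pose psi h := if pselect (exists2 L, word_in_H L & eval_word genW L = h) is left P
  then eval_word v (s2val (cid2 P)) else 0.
have psi_word L : word_in_H L -> psi (eval_word genW L) = eval_word v L.
  move=> HL; rewrite /psi; case: pselect => [P|[]]; last by exists L.
  by case: (cid2 P) => L' HL' /= EL'; apply: eval_word_inj.
exists psi; split => // _ _ /inH_word[L1 H1 <-] /inH_word[L2 H2 <-].
by rewrite -eval_word_sub !psi_word ?word_in_H_sub ?eval_word_sub.
Qed.

Lemma split_of_divisible_lifts (G : zmodType) (phi : {additive G -> W K})
    (X : nat -> G) (Y : K -> G) :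
  (forall n, phi (X n) = xv n) -> (forall a, phi (Y a) = yv a) ->
  (forall a n, eta a n -> divisible (p n) (Y a - X n)) ->
  exists psi : W K -> G,
    (forall u w, inH p eta u -> inH p eta w -> psi (u - w) = psi u - psi w) /\
    (forall h, inH p eta h -> phi (psi h) = h).
Proof.
move=> X_lift Y_lift YX_div.
have /choice[Z YXZ] (an : K * nat) :
    exists z, eta an.1 an.2 -> Y an.1 - X an.2 = z *+ p an.2.
  by case: (boolP (eta an.1 an.2)) => [/YX_div[z]|_]; [exists z | exists 0].
pose v c := match c with GX n => X n | GY a => Y a | GZ a n => Z (a, n) end.
have rv : respects_relations v by move=> a n /(YXZ (a, n)).
have [psi [psi_sub psi_word]] := presentation_lift rv.
have phi_v c : gen_in_H c -> phi (v c) = genW c.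
  case: c => [n|a|a n ean] /=; rewrite ?X_lift ?Y_lift //.
  apply: (natmulfI (prime_gt0 (p_prime n))).
  by rewrite -raddfMn -YXZ //= raddfB X_lift Y_lift; apply: respects_genW.
exists psi; split => // _ /inH_word[L HL <-].
rewrite psi_word // raddf_eval_word; apply: eq_big_seq => t tL /=.
by rewrite phi_v // (allP HL).
Qed.
End Presentation.

Section Lifts.
Variables (K : eqType) (p : nat -> nat) (eta : K -> nat -> bool).
Hypotheses (p_prime : forall n, prime (p n)) (p_inj : injective p).
Variables (G : zmodType) (T : G -> Prop) (phi : {additive G -> W K}).
Hypotheses (T_sub : subgroup T) (T_tors : torsion_pred T).
Hypothesis phi_onto : forall h, inH p eta h -> exists g, phi g = h.
Hypothesis phi_ker : forall g, phi g = 0 <-> T g.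
Variables (xt : nat -> G) (ga : G) (a : K).
Hypotheses (xt_lift : forall n, phi (xt n) = xv n) (ga_lift : phi ga = yv a).

Lemma divisible_up_to_kernel n :
  eta a n -> exists2 d, T d & divisible (p n) (ga - xt n - d).
Proof.
move=> ean; have [w w_lift] := phi_onto (inHz p ean).
exists (ga - xt n - w *+ p n); last by exists w; rewrite opprB addrC subrK.
apply/phi_ker; rewrite !raddfB raddfMn /= ga_lift xt_lift w_lift.
by rewrite -(respects_genW p_prime ean) subrr.
Qed.

Lemma divisible_lift_y ta N : T ta ->
  (forall n, eta a n -> ~ divisible (p n) (ga - ta - xt n) -> (n < N)%N) ->
  exists Y, phi Y = yv a /\ forall n, eta a n -> divisible (p n) (Y - xt n).
Proof.
move=> Tta ta_div.
have /choice[d Hd] n : exists d, T d /\ (eta a n -> divisible (p n) (ga - xt n - d)).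
  have [/divisible_up_to_kernel[d Td dd]|_] := boolP (eta a n); first by exists d.
  by exists 0; split => //; exact: T_sub.1.
have [|u [Tu u_lt u_ge]] :=
    torsion_crt (e := fun n => d n - ta) N T_sub T_tors p_prime p_inj.
  by move=> m; apply: T_sub.2 => //; case: (Hd m).
exists (ga - ta - u); split.
  by rewrite !raddfB ga_lift (phi_ker ta).2 // (phi_ker u).2 // !subr0.
move=> n ean; have divB := (subgroup_divisible G (p n)).2.
have [nN|Nn] := ltnP n N.
  have -> : ga - ta - u - xt n = (ga - xt n - d n) - (u - (d n - ta)).
    by rewrite opprB !addrA subrK [LHS]addrAC [ga - ta - _]addrAC.
  exact: divB ((Hd n).2 ean) (u_lt n nN).
rewrite addrAC; apply: divB (u_ge _ Nn).
by apply/not_notP => nd; move: (ta_div n ean nd); rewrite ltnNge Nn.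
Qed.
End Lifts.

Theorem lemma4p6
  (K : eqType) (Kuncountable : ~ exists f : K -> nat, injective f)
  (p : nat -> nat) (p_prime : forall n, prime (p n))
  (p_incr : forall n m, (n < m)%N -> (p n < p m)%N)
  (eta : K -> nat -> bool)
  (G : zmodType) (T : G -> Prop) (phi : {additive G -> W K})
  (T_sub : subgroup T) (T_tors : torsion_pred T)
  (phi_in : forall g, inH p eta (phi g))
  (phi_onto : forall h, inH p eta h -> exists g, phi g = h)
  (phi_ker : forall g, phi g = 0 <-> T g)
  (T_bal : balanced T)
  (g : K -> G) (g_lift : forall a, phi (g a) = yv a)
  (xt : nat -> G) (xt_lift : forall n, phi (xt n) = @xv K n)
  (hyp : forall a, exists2 ta, T ta &
      exists N : nat, forall n, eta a n = true ->
        ~ divisible (p n) (g a - ta - xt n) -> (n < N)%N) :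
  exists psi : W K -> G,
    (forall u v, inH p eta u -> inH p eta v -> psi (u - v) = psi u - psi v) /\
    (forall h, inH p eta h -> phi (psi h) = h).
Proof.
have p_inj : injective p := incn_inj (leq_mono p_incr).
have /choice[Y Y_spec] a : exists Y, phi Y = yv a /\
    forall n, eta a n -> divisible (p n) (Y - xt n).
  have [ta Tta [N ta_div]] := hyp a.
  exact: (divisible_lift_y p_prime p_inj T_sub T_tors phi_onto phi_ker xt_lift
    (g_lift a) Tta ta_div).
apply: (split_of_divisible_lifts p_prime p_inj xt_lift) => a; first exact: (Y_spec a).1.
exact: (Y_spec a).2.
Qed.
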